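(* Let $G$ be a connected graph. Then $\gamma_{cI}(G)=2$ if and only if $G\in\{K_{1,n},K_{2,n},K^*_{2,n}\}$ for some $n\ge1$, where $K^*_{2,n}$ is the graph obtained from the complete bipartite graph $K_{2,n}$ by joining (adding the edge between) the two vertices of its $2$-vertex partite set.
   Context: All graphs are finite and simple; $N(v)$ is the open neighborhood of $v$. For $f:V(G)\to\{0,1,2\}$ let $V_i=\{v: f(v)=i\}$ and $\omega(f)=\sum_v f(v)$. A covering Italian dominating function (CID function) of $G$ is an $f:V(G)\to\{0,1,2\}$ such that every vertex $v$ with $f(v)=0$ satisfies $\sum_{u\in N(v)}f(u)\ge 2$, and $V_0$ is an independent set. $\gamma_{cI}(G)$ is the minimum of $\omega(f)$ over all CID functions of $G$. *)

From mathcomp Require Import all_boot.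
Set Implicit Arguments. Unset Strict Implicit. Unset Printing Implicit Defensive.

Definition simple_graph (T : finType) (e : rel T) : Prop :=
  symmetric e /\ irreflexive e.

Definition connected_graph (T : finType) (e : rel T) : Prop :=
  0 < #|T| /\ forall x y : T, connect e x y.

Definition weight (T : finType) (f : {ffun T -> 'I_3}) : nat :=
  \sum_(v : T) (f v : nat).

Definition is_CID (T : finType) (e : rel T) (f : {ffun T -> 'I_3}) : bool :=
  [forall v : T, ((f v : nat) == 0) ==> (2 <= \sum_(u : T | e v u) (f u : nat))]
  && [forall u : T, forall v : T, (((f u : nat) == 0) && ((f v : nat) == 0)) ==> ~~ e u v].

(* gamma_cI: minimum weight of a CID function (the constant-2 function is
   always a CID function of weight 2|V|, so the default value is never
   smaller than the true minimum). *)
Definition gamma_cI (T : finType) (e : rel T) : nat :=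
  \big[minn/(2 * #|T|)]_(f : {ffun T -> 'I_3} | is_CID e f) weight f.

Definition isomorphic (T U : finType) (e : rel T) (e' : rel U) : Prop :=
  exists g : T -> U, bijective g /\ forall x y : T, e' (g x) (g y) = e x y.

Definition star_rel (n : nat) : rel 'I_(n.+1) :=
  fun x y => (x != y) && (((x : nat) == 0) || ((y : nat) == 0)).

(* K_{2,n} on 'I_(n+2): partite sets {0,1} and {2,...,n+1} *)
Definition K2n_rel (n : nat) : rel 'I_(n.+2) :=
  fun x y => ((x : nat) < 2) (+) ((y : nat) < 2).

Definition K2n_star_rel (n : nat) : rel 'I_(n.+2) :=
  fun x y => K2n_rel x y || ([&& (x : nat) < 2, (y : nat) < 2 & x != y]).

(* On at least two vertices every CID function has weight at least 2, since a
   vertex of weight 0 already collects 2 from its neighbours.  If f is a CID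
   function of weight exactly 2 with support S, then |S| is 1 or 2, every vertex
   outside S is adjacent to all of S and to nothing else, so G is K_{1,n}
   (|S| = 1), or K_{2,n} resp. K*_{2,n} according as the two vertices of S are
   adjacent; when |V| = 2 connectivity gives K_2 = K_{1,1}.  Conversely each of
   these graphs carries such a function: weight 2 on the centre, or weight 1 on
   both vertices of the 2-vertex part. *)

From mathcomp Require Import all_boot zify.

Set Implicit Arguments. Unset Strict Implicit. Unset Printing Implicit Defensive.

Definition supp (T : finType) (f : {ffun T -> 'I_3}) : {set T} := [set v | 0 < f v].

Definition const_on (T : finType) (S : {set T}) (c : 'I_3) : {ffun T -> 'I_3} :=
  [ffun v => if v \in S then c else ord0].

Lemma bigmin_le_cond (I : finType) (P : pred I) (F : I -> nat) x0 i :
  P i -> \big[minn/x0]_(j | P j) F j <= F i.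
Proof.
move=> Pi; elim: (index_enum I) (mem_index_enum i) => // j r IHr.
rewrite inE big_cons => /predU1P[<- | ri]; first by rewrite Pi geq_minl.
by case: (P j); [apply: leq_trans (geq_minr _ _) _ |]; apply: IHr.
Qed.

Section Weight.
Variable T : finType.
Implicit Types (f : {ffun T -> 'I_3}) (S : {set T}) (c : 'I_3).

Lemma weight_supp f : weight f = \sum_(v in supp f) f v.
Proof.
rewrite /weight [RHS]big_mkcond; apply: eq_bigr => v _.
by rewrite inE; case: ltnP => //; rewrite leqn0 => /eqP.
Qed.

Lemma card_supp_le_weight f : #|supp f| <= weight f.
Proof.
by rewrite weight_supp -sum1_card; apply: leq_sum => v; rewrite inE.
Qed.

Lemma card_supp_gt0 f : 0 < weight f -> 0 < #|supp f|.
Proof.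
rewrite !lt0n; apply: contra_neq => /cards0_eq S0.
by rewrite weight_supp S0 big_set0.
Qed.

Lemma weight_const_on S c : weight (const_on S c) = #|S| * c.
Proof.
rewrite /weight -sum_nat_const [RHS]big_mkcond; apply: eq_bigr => v _.
by rewrite ffunE; case: (v \in S).
Qed.

Lemma supp_const_on S c : 0 < c -> supp (const_on S c) = S.
Proof. by move=> c_gt0; apply/setP => v; rewrite inE ffunE; case: (v \in S). Qed.

End Weight.

Section CoveringItalian.
Variables (T : finType) (e : rel T).
Implicit Types f : {ffun T -> 'I_3}.

Lemma is_CIDP f : reflect
  ((forall v, v \notin supp f -> 2 <= \sum_(u | e v u) f u) /\
   (forall u v, u \notin supp f -> v \notin supp f -> ~~ e u v))
  (is_CID e f).
Proof.
have suppN v : (v \notin supp f) = ((f v : nat) == 0) by rewrite inE eqn0Ngt.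
apply: (iffP andP) => [[/forallP dom /forallP indep] | [dom indep]]; split.
- by move=> v; rewrite suppN; apply/implyP/dom.
- move=> u v; rewrite !suppN => u0 v0.
  by apply: (implyP (forallP (indep u) v)); rewrite u0 v0.
- by apply/forallP => v; apply/implyP; rewrite -suppN; apply: dom.
- apply/forallP => u; apply/forallP => v; apply/implyP => /andP[].
  by rewrite -!suppN; apply: indep.
Qed.

Lemma CID_of_supp_full f : supp f = setT -> is_CID e f.
Proof. by move=> suppT; apply/is_CIDP; split=> [v|u v]; rewrite suppT inE. Qed.

Lemma weight_CID_ge2 f : 1 < #|T| -> is_CID e f -> 2 <= weight f.
Proof.
move=> T_gt1 /is_CIDP[dom _].
case: (pickP [predC supp f]) => [v vS | suppT].
  apply: leq_trans (dom v vS) _.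
  by rewrite /weight [X in _ <= X](bigID (e v)) leq_addr.
apply: leq_trans T_gt1 (leq_trans _ (card_supp_le_weight f)).
have -> : supp f = setT by apply/setP => v; move: (suppT v); rewrite !inE /= => /negbFE.
by rewrite cardsT.
Qed.

Lemma CID_weight2P f : weight f = 2 ->
  reflect (forall v u, v \notin supp f -> e v u = (u \in supp f)) (is_CID e f).
Proof.
move=> wf; apply: (iffP (is_CIDP f)) => [[dom indep] v u vS | adj].
  have [uS | uS] := boolP (u \in supp f); last exact/negbTE/indep.
  apply/negPn/negP => nevu; have := dom v vS.
  move: wf uS; rewrite inE /weight (bigID (e v)) /= [X in _ + X](bigD1 u) //=; lia.
split=> [v vS | u v uS vS]; last by rewrite adj.
by rewrite (eq_bigl _ _ (adj v ^~ vS)) -weight_supp wf.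
Qed.

Lemma gamma_cI_min f : is_CID e f -> gamma_cI e <= weight f.
Proof. exact: bigmin_le_cond. Qed.

Lemma gamma_cI_attained : exists2 f, is_CID e f & gamma_cI e = weight f.
Proof.
apply: (big_ind (fun m => exists2 f, is_CID e f & m = weight f)).
- exists (const_on setT ord_max); last by rewrite weight_const_on cardsT mulnC.
  by apply/CID_of_supp_full/supp_const_on.
- by move=> _ _ [f CIDf ->] [g CIDg ->]; rewrite /minn; case: ifP; [exists f | exists g].
- by move=> f CIDf; exists f.
Qed.

Lemma gamma_cI_le_card : gamma_cI e <= #|T|.
Proof.
pose one : 'I_3 := Ordinal (isT : 1 < 3).
have CID1 : is_CID e (const_on setT one) by apply/CID_of_supp_full/supp_const_on.
by apply: leq_trans (gamma_cI_min CID1) _; rewrite weight_const_on cardsT muln1.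
Qed.

Lemma gamma_cI_ge2 : 1 < #|T| -> 2 <= gamma_cI e.
Proof. by move=> T_gt1; have [f CIDf ->] := gamma_cI_attained; apply: weight_CID_ge2. Qed.

Lemma gamma_cI_le2_of_join (S : {set T}) (c : 'I_3) :
  #|S| * c = 2 -> (forall v u, v \notin S -> e v u = (u \in S)) -> gamma_cI e <= 2.
Proof.
move=> wS join; have c_gt0 : 0 < c by move: wS; case: (nat_of_ord c) => //; rewrite muln0.
have w2 : weight (const_on S c) = 2 by rewrite weight_const_on.
have CIDf : is_CID e (const_on S c) by apply/(CID_weight2P w2); rewrite supp_const_on.
by rewrite -w2 gamma_cI_min.
Qed.

End CoveringItalian.

Section Isomorphism.
Variables (T U : finType) (e : rel T) (e' : rel U).

Lemma card_isomorphic : isomorphic e e' -> #|T| = #|U|.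
Proof. by case=> g [/bij_eq_card]. Qed.

Lemma gamma_cI_isomorphic_le : isomorphic e e' -> gamma_cI e <= gamma_cI e'.
Proof.
case=> g [g_bij eg]; have [f' CIDf' ->] := gamma_cI_attained e'.
pose f := [ffun x => f' (g x)].
have sum_comp (P : pred U) : \sum_(u | P u) f' u = \sum_(x | P (g x)) f x.
  by rewrite (reindex g (onW_bij _ g_bij)); apply: eq_bigr => x _; rewrite ffunE.
have suppf x : (x \in supp f) = (g x \in supp f') by rewrite !inE ffunE.
have CIDf : is_CID e f.
  case/is_CIDP: CIDf' => dom indep; apply/is_CIDP; split => [v | u v]; rewrite !suppf.
  - by move=> /dom; rewrite sum_comp; under eq_bigl do rewrite eg.
  - by rewrite -eg; apply: indep.
by apply: leq_trans (gamma_cI_min CIDf) _; rewrite /weight sum_comp.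
Qed.

End Isomorphism.

Lemma enum_prefix_bij (T : finType) (S : {set T}) k : #|T| = k.+1 ->
  exists2 g : T -> 'I_k.+1, bijective g & forall x, (g x < #|S|) = (x \in S).
Proof.
move=> cardT; pose s := enum S ++ enum (~: S).
have s_mem x : x \in s by rewrite mem_cat !mem_enum in_setC orbN.
have size_s : size s = k.+1 by rewrite size_cat -!cardE cardsC.
have index_lt x : index x s < k.+1 by rewrite -size_s index_mem.
exists (fun x => Ordinal (index_lt x)) => [|x].
  apply: inj_card_bij; last by rewrite card_ord cardT.
  move=> x y /(congr1 val) /= eq_index.
  by rewrite -(nth_index x (s_mem x)) eq_index nth_index.
rewrite /= index_cat mem_enum cardE; case: ifP => xS.
  by rewrite index_mem mem_enum.
by rewrite ltnNge leq_addr.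
Qed.

Lemma isomorphic_prefix (T : finType) (e : rel T) k (S : {set T}) (r : rel 'I_k.+1)
    (F : bool -> bool -> bool -> bool) :
  #|T| = k.+1 ->
  (forall x y, e x y = F (x \in S) (y \in S) (x == y)) ->
  (forall i j, r i j = F (i < #|S|) (j < #|S|) (i == j)) ->
  isomorphic e r.
Proof.
move=> cardT eE rE; have [g g_bij gS] := enum_prefix_bij S cardT.
by exists g; split=> // x y; rewrite rE !gS (bij_eq g_bij) eE.
Qed.

Lemma star_relE n (i j : 'I_n.+1) : star_rel i j = (i < 1) (+) (j < 1).
Proof.
rewrite /star_rel !ltnS !leqn0; case: (eqVneq i j) => [->|neq]; first by rewrite addbb.
case: (eqVneq (i : nat) 0) => i0; case: (eqVneq (j : nat) 0) => j0 //=.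
by case/eqP: neq; apply: val_inj; rewrite /= i0 j0.
Qed.

Lemma card_ord_lt2 n : #|[set i : 'I_n.+2 | i < 2]| = 2.
Proof.
rewrite (_ : [set i | _] = [set ord0; Ordinal (isT : 1 < n.+2)]) ?cards2 //.
by apply/setP => -[[|[|i]] lt_i]; rewrite !inE -?val_eqE.
Qed.

Lemma gamma_cI_star_le2 n : gamma_cI (@star_rel n) <= 2.
Proof.
apply: (gamma_cI_le2_of_join (S := [set ord0]) (c := ord_max)); first by rewrite cards1.
have lt1 (i : 'I_n.+1) : (i < 1) = (i \in [set ord0]) by rewrite ltnS leqn0 in_set1.
by move=> v u; rewrite star_relE !lt1 => /negbTE->.
Qed.

Lemma gamma_cI_K2n_le2 n : gamma_cI (@K2n_rel n) <= 2.
Proof.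
apply: (gamma_cI_le2_of_join (S := [set i : 'I_n.+2 | i < 2]) (c := Ordinal (isT : 1 < 3))).
  by rewrite card_ord_lt2.
by move=> v u; rewrite !inE /K2n_rel => /negbTE->.
Qed.

Lemma gamma_cI_K2n_star_le2 n : gamma_cI (@K2n_star_rel n) <= 2.
Proof.
apply: (gamma_cI_le2_of_join (S := [set i : 'I_n.+2 | i < 2]) (c := Ordinal (isT : 1 < 3))).
  by rewrite card_ord_lt2.
by move=> v u; rewrite !inE /K2n_star_rel /K2n_rel => /negbTE->; rewrite orbF.
Qed.

Section SimpleGraph.
Variables (T : finType) (e : rel T).
Hypotheses (e_sym : symmetric e) (e_irr : irreflexive e).

Lemma connect_neighbour x y : connect e x y -> x != y -> exists z, e x z.
Proof.
case/connectP => -[/= _ ->|z p /= /andP[exz _] _]; first by rewrite eqxx.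
by exists z.
Qed.

Lemma isomorphic_K2 : #|T| = 2 -> (forall x y, connect e x y) -> isomorphic e (@star_rel 1).
Proof.
move=> T2 conn; have /cards2P[a [b [ab Tab]]] : #|[set: T]| == 2 by rewrite cardsT T2.
have ab_cover x : (x == a) || (x == b) by rewrite -in_set2 -Tab inE.
have eab : e a b.
  have [z eaz] := connect_neighbour (conn a b) ab.
  by case/orP: (ab_cover z) eaz => /eqP->; rewrite ?e_irr.
apply: (isomorphic_prefix (S := [set a]) (F := fun u v _ => u (+) v)) => [//|x y|i j].
  rewrite !in_set1; case/orP: (ab_cover x) => /eqP->; case/orP: (ab_cover y) => /eqP->;
    by rewrite ?e_irr ?eqxx ?[b == a]eq_sym ?(negbTE ab) ?(e_sym b a).
by rewrite star_relE cards1.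
Qed.

Lemma edge_in_pair (S : {set T}) x y : #|S| <= 2 -> x \in S -> y \in S ->
  e x y = [exists u in S, exists v in S, e u v] && (x != y).
Proof.
move=> S_le2 xS yS; apply/idP/andP => [exy | [/existsP[u /andP[uS]] /existsP[v /andP[vS euv]] xy]].
  split; last by apply: contraTneq exy => ->; rewrite e_irr.
  by apply/existsP; exists x; rewrite xS; apply/existsP; exists y; rewrite yS.
have uv : u != v by apply: contraTneq euv => ->; rewrite e_irr.
have SE : S = [set u; v].
  apply/esym/eqP; rewrite eqEcard cards2 uv S_le2 andbT.
  by apply/subsetP => w; rewrite !inE => /orP[] /eqP->.
move: xS yS xy; rewrite SE !inE => /orP[] /eqP-> /orP[] /eqP->;
  by rewrite ?eqxx // e_sym.
Qed.

Variable f : {ffun T -> 'I_3}.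
Hypotheses (f_CID : is_CID e f) (f_weight : weight f = 2).
Local Notation S := (supp f).

Lemma CID_weight2_rel x y : e x y = (x \in S) (+) (y \in S) || [&& x \in S, y \in S & e x y].
Proof.
have adj := elimT (CID_weight2P e f_weight) f_CID.
case xS: (x \in S); case yS: (y \in S) => //=; first by rewrite e_sym adj ?yS.
all: by rewrite adj ?xS.
Qed.

Lemma CID_weight2_isomorphic : 2 < #|T| ->
  exists n, 1 <= n /\ (isomorphic e (@star_rel n) \/ isomorphic e (@K2n_rel n) \/
                       isomorphic e (@K2n_star_rel n)).
Proof.
move=> T_gt2.
have S_gt0 : 0 < #|S| by rewrite card_supp_gt0 ?f_weight.
have S_le2 : #|S| <= 2 by rewrite -f_weight card_supp_le_weight.
pose inner := [exists u in S, exists v in S, e u v].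
have eE x y : e x y = (x \in S) (+) (y \in S) || [&& inner, x \in S, y \in S & x != y].
  rewrite {1}CID_weight2_rel; case xS: (x \in S); case yS: (y \in S); rewrite /= ?andbF //.
  by rewrite (edge_in_pair S_le2).
have [inner_edge | no_inner] := boolP inner.
  have S2 : #|S| = 2.
    case/existsP: inner_edge => u /andP[uS /existsP[v /andP[vS euv]]].
    suff: 1 < #|S| by lia.
    by apply/card_gt1P; exists u, v; split => //; apply: contraTneq euv => ->; rewrite e_irr.
  exists (#|T|.-2); split; first lia; right; right.
  apply: (isomorphic_prefix (S := S) (F := fun a b c => a (+) b || [&& a, b & ~~ c])).
  - lia.
  - by move=> x y; rewrite eE inner_edge.
  - by move=> i j; rewrite S2.
have xorE x y : e x y = (x \in S) (+) (y \in S) by rewrite eE (negbTE no_inner) orbF.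
have [S1 | S2] : #|S| = 1 \/ #|S| = 2 by lia.
  exists (#|T|.-1); split; first lia; left.
  apply: (isomorphic_prefix (S := S) (F := fun a b _ => a (+) b)) => [|x y|i j].
  - lia.
  - exact: xorE.
  - by rewrite star_relE S1.
exists (#|T|.-2); split; first lia; right; left.
apply: (isomorphic_prefix (S := S) (F := fun a b _ => a (+) b)) => [|x y|i j].
- lia.
- exact: xorE.
- by rewrite S2.
Qed.

End SimpleGraph.

Theorem proposition9 (T : finType) (e : rel T) :
  simple_graph e -> connected_graph e ->
  (gamma_cI e = 2 <->
   exists n : nat, 1 <= n /\
     (isomorphic e (@star_rel n) \/ isomorphic e (@K2n_rel n) \/
      isomorphic e (@K2n_star_rel n))).
Proof.
move=> [e_sym e_irr] [_ conn]; split => [gamma2 | [n [n_gt0 iso]]].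
  have [f CIDf wf] := gamma_cI_attained e.
  case: (ltngtP #|T| 2) => [T_lt2 | T_gt2 | T2].
  - by have := gamma_cI_le_card e; lia.
  - by apply: (CID_weight2_isomorphic e_sym e_irr CIDf) => //; rewrite -wf.
  - by exists 1; split => //; left; apply: isomorphic_K2.
have T_gt1 : 1 < #|T| by case: iso => [|[|]] /card_isomorphic->; rewrite card_ord.
apply/eqP; rewrite eqn_leq gamma_cI_ge2 // andbT.
case: iso => [|[|]] /gamma_cI_isomorphic_le /leq_trans; apply.
- exact: gamma_cI_star_le2.
- exact: gamma_cI_K2n_le2.
- exact: gamma_cI_K2n_star_le2.
Qed.
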